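(* Let $\mathcal X,\mathcal Y$ be finite sets, let $P_{XY}$ be a probability distribution on $\mathcal X\times\mathcal Y$, let $n\ge 1$, and let $\mathcal A$ be a finite set of possible training sets. Let $\mathbb P(y_{1:n}\mid a,x_{1:n})$ be an inductive learning protocol (as defined in the context). Then there exist a set $F$ of functions $f:\mathcal X\to\mathcal Y$ and a stochastic map $T(f\mid a)$ (a probability distribution on $F$ for each $a\in\mathcal A$) such that, with $Q(y\mid x,f)=\delta_{y,f(x)}$, the protocol $$\tilde{\mathbb P}(y_{1:n}\mid a,x_{1:n})=\sum_{f\in F}\Big[\prod_{i=1}^n Q(y_i\mid x_i,f)\Big]T(f\mid a)$$ satisfies $\mathbf E[\mathbb P\mid a]=\mathbf E[\tilde{\mathbb P}\mid a]$ for every $a\in\mathcal A$.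
   Context: Notation: $x_{1:n}=(x_1,\dots,x_n)$, and similarly for $y_{1:n}$, $y'_{1:n}$. A learning protocol is a stochastic map $\mathbb P(y_{1:n}\mid a,x_{1:n})$, i.e. for each training set $a$ and test instances $x_{1:n}\in\mathcal X^n$, a probability distribution over label tuples $y_{1:n}\in\mathcal Y^n$. Its marginal maps are $\mathbb P_i(y_i\mid a,x_{1:n})=\sum_{y_{1:i-1},y_{i+1:n}}\mathbb P(y_{1:n}\mid a,x_{1:n})$. The protocol is called inductive (non-signalling) if for every $i$, $\mathbb P_i(y_i\mid a,x_{1:n})$ does not depend on $x_j$ for $j\neq i$, i.e. $\mathbb P_i(y_i\mid a,x_{1:i-1},x_i,x_{i+1:n})=\mathbb P_i(y_i\mid a,x'_{1:i-1},x_i,x'_{i+1:n})$ for all $x'_{1:i-1},x'_{i+1:n}$. With $s_{j,k}=1-\delta_{j,k}$, the conditional expected risk is $$\mathbf E[\mathbb P\mid a]=\sum_{x_{1:n},y_{1:n},y'_{1:n}}\frac1n\sum_{i=1}^n s_{y_i,y'_i}\,\mathbb P(y_{1:n}\mid a,x_{1:n})\prod_{j=1}^n P_{XY}(x_j,y'_j).$$ *)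

(* all quantities are finite sums over finite types, so we
   work over an arbitrary real field R (covers the reals). *)
From HB Require Import structures.
From mathcomp Require Import all_boot all_order all_algebra.
Set Implicit Arguments. Unset Strict Implicit. Unset Printing Implicit Defensive.
Import Order.TTheory GRing.Theory Num.Theory.
Local Open Scope ring_scope.

Definition is_joint_dist (R : realFieldType) (X Y : finType) (PXY : X -> Y -> R) :=
  (forall x y, 0 <= PXY x y) /\ \sum_(x : X) \sum_(y : Y) PXY x y = 1.

Definition is_protocol (R : realFieldType) (X Y A : finType) (n : nat)
  (P : A -> {ffun 'I_n -> X} -> {ffun 'I_n -> Y} -> R) :=
  (forall a x y, 0 <= P a x y) /\
  (forall a x, \sum_(y : {ffun 'I_n -> Y}) P a x y = 1).

Definition marginal (R : realFieldType) (X Y A : finType) (n : nat)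
  (P : A -> {ffun 'I_n -> X} -> {ffun 'I_n -> Y} -> R)
  (i : 'I_n) (yi : Y) (a : A) (x : {ffun 'I_n -> X}) : R :=
  \sum_(y : {ffun 'I_n -> Y} | y i == yi) P a x y.

Definition inductive (R : realFieldType) (X Y A : finType) (n : nat)
  (P : A -> {ffun 'I_n -> X} -> {ffun 'I_n -> Y} -> R) :=
  forall (i : 'I_n) (yi : Y) (a : A) (x x' : {ffun 'I_n -> X}),
    x i = x' i -> marginal P i yi a x = marginal P i yi a x'.

Definition sdist (R : realFieldType) (Y : eqType) (y y' : Y) : R :=
  1 - (y == y')%:R.

Definition exp_risk (R : realFieldType) (X Y A : finType) (n : nat)
  (PXY : X -> Y -> R)
  (P : A -> {ffun 'I_n -> X} -> {ffun 'I_n -> Y} -> R) (a : A) : R :=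
  \sum_(x : {ffun 'I_n -> X}) \sum_(y : {ffun 'I_n -> Y})
    \sum_(y' : {ffun 'I_n -> Y})
      (n%:R)^-1 * (\sum_(i < n) sdist R (y i) (y' i)) * P a x y *
      \prod_(j < n) PXY (x j) (y' j).

Definition Qdet (R : realFieldType) (X Y : finType) (y : Y) (x : X)
  (f : {ffun X -> Y}) : R := (y == f x)%:R.

Definition det_protocol (R : realFieldType) (X Y A : finType) (n : nat)
  (F : {set {ffun X -> Y}}) (T : A -> {ffun X -> Y} -> R)
  (a : A) (x : {ffun 'I_n -> X}) (y : {ffun 'I_n -> Y}) : R :=
  \sum_(f in F) (\prod_(i < n) Qdet R (y i) (x i) f) * T a f.

(* An inductive protocol has marginals P_i(y | a, x_{1:n}) that depend on x_i alone, and the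
   expected risk is the average over i of a quantity depending linearly on the i-th marginal
   only.  Hence replacing every marginal by their average m(y | x) leaves the risk unchanged.  The
   kernel m is realised by a mixture of deterministic labelings: draw f(x) independently from
   m(. | x) for every x; the resulting protocol has all marginals equal to m. *)
From HB Require Import structures.
From mathcomp Require Import all_boot all_order all_algebra.
Set Implicit Arguments. Unset Strict Implicit. Unset Printing Implicit Defensive.
Import Order.TTheory GRing.Theory Num.Theory.
Local Open Scope ring_scope.

Lemma sum_ffun_prodD1 (R : comPzRingType) (I J : finType) (i : I)
    (k : J -> R) (w : I -> J -> R) :
  \sum_(f : {ffun I -> J}) k (f i) * \prod_(j | j != i) w j (f j)
  = (\sum_y k y) * \prod_(j | j != i) \sum_y w j y.
Proof.
pose F j y := if j == i then k y else w j y.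
have distrF : \prod_j \sum_y F j y = \sum_(f : {ffun I -> J}) \prod_j F j (f j).
  exact: bigA_distr_bigA.
rewrite (bigD1 i) //= /F eqxx in distrF.
rewrite (eq_bigr (fun j => \sum_y w j y)) in distrF; last by move=> j /negbTE ->.
rewrite distrF; apply: eq_bigr => f _.
rewrite [RHS](bigD1 i) //= /F eqxx; congr (_ * _).
by apply: eq_bigr => j /negbTE ->.
Qed.

Lemma sum_nat_eq_pred (R : nzRingType) (T : finType) (P : pred T) (t0 : T) :
  \sum_(t | P t) (t == t0)%:R = (P t0)%:R :> R.
Proof.
rewrite big_mkcond (bigD1 t0) //= eqxx big1 ?addr0; first by case: (P t0).
by move=> t /negbTE ->; case: (P t).
Qed.

Lemma prod_nat_eq_ffun (R : comNzRingType) (I J : finType) (y : {ffun I -> J}) (g : I -> J) :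
  \prod_i ((y i == g i)%:R : R) = (y == finfun g)%:R.
Proof.
have [-> | neq_yg] := eqVneq y (finfun g).
  by rewrite big1 // => i _; rewrite ffunE eqxx.
have [i yi_neq] : exists i, y i != g i.
  apply/existsP; rewrite -negb_forall; apply: contra neq_yg => /forallP eq_yg.
  by apply/eqP/ffunP => i; rewrite ffunE; apply/eqP.
by rewrite (bigD1 i) //= (negbTE yi_neq) mul0r.
Qed.

Definition is_kernel (R : realFieldType) (X Y : finType) (k : Y -> X -> R) :=
  (forall y x, 0 <= k y x) /\ (forall x, \sum_y k y x = 1).

Definition prod_kernel (R : realFieldType) (X Y : finType) (k : Y -> X -> R)
    (f : {ffun X -> Y}) : R :=
  \prod_x k (f x) x.

Section ProdKernel.
Variables (R : realFieldType) (X Y : finType) (k : Y -> X -> R).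
Hypothesis kernel_k : is_kernel k.

Lemma prod_kernel_ge0 f : 0 <= prod_kernel k f.
Proof. by apply: prodr_ge0 => x _; apply: kernel_k.1. Qed.

Lemma sum_prod_kernel : \sum_(f : {ffun X -> Y}) prod_kernel k f = 1.
Proof.
rewrite -(bigA_distr_bigA (fun x y => k y x)) /=.
by apply: big1 => x _; apply: kernel_k.2.
Qed.

Lemma sum_prod_kernel_eq (x : X) (y : Y) :
  \sum_(f : {ffun X -> Y}) (y == f x)%:R * prod_kernel k f = k y x.
Proof.
under eq_bigr => f _ do rewrite /prod_kernel (bigD1 x) //= mulrA.
rewrite (sum_ffun_prodD1 x (fun y' => (y == y')%:R * k y' x) (fun x' y' => k y' x')).
rewrite [X in _ * X]big1 ?mulr1; last by move=> x' _; apply: kernel_k.2.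
rewrite (eq_bigr (fun y' => (y' == y)%:R * k y x)); last first.
  by move=> y' _; rewrite eq_sym; case: eqP => [-> | _]; rewrite ?mul0r ?mul1r.
by rewrite -mulr_suml sum_nat_eq_pred mul1r.
Qed.

End ProdKernel.

Lemma marginal_det_protocol (R : realFieldType) (X Y A : finType) (n : nat)
    (F : {set {ffun X -> Y}}) (T : A -> {ffun X -> Y} -> R) i yi a x :
  marginal (@det_protocol R X Y A n F T) i yi a x
  = \sum_(f in F) (yi == f (x i))%:R * T a f.
Proof.
rewrite /marginal /det_protocol exchange_big /=; apply: eq_bigr => f _.
rewrite -mulr_suml; congr (_ * _).
under eq_bigr => y _ do rewrite /Qdet (prod_nat_eq_ffun _ y (fun j => f (x j))).
by rewrite sum_nat_eq_pred ffunE eq_sym.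
Qed.

Lemma marginal_det_prod_kernel (R : realFieldType) (X Y A : finType) (n : nat)
    (k : A -> Y -> X -> R) i yi a x :
  is_kernel (k a) ->
  marginal (@det_protocol R X Y A n setT (fun a => prod_kernel (k a))) i yi a x
  = k a yi (x i).
Proof.
move=> kernel_ka; rewrite marginal_det_protocol -(sum_prod_kernel_eq kernel_ka).
by apply: eq_bigl => f; rewrite in_setT.
Qed.

Lemma avg_kernel (R : realFieldType) (X Y : finType) (n : nat) (g : 'I_n -> Y -> X -> R) :
  (0 < n)%N -> (forall i, is_kernel (g i)) ->
  is_kernel (fun y x => n%:R^-1 * \sum_i g i y x).
Proof.
move=> n_gt0 kernel_g; split=> [y x | x].
  by rewrite mulr_ge0 ?invr_ge0 ?ler0n ?sumr_ge0 // => i _; apply: (kernel_g i).1.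
rewrite -mulr_sumr exchange_big /= (eq_bigr (fun=> 1)) => [|i _]; last exact: (kernel_g i).2.
by rewrite sumr_const card_ord -mulr_natr mul1r mulVf // pnatr_eq0 -lt0n.
Qed.

Section Marginals.
Variables (R : realFieldType) (X Y A : finType) (n : nat).
Variable P : A -> {ffun 'I_n -> X} -> {ffun 'I_n -> Y} -> R.

Lemma marginal_kernel i a : is_protocol P ->
  is_kernel (fun yi x0 => marginal P i yi a [ffun=> x0]).
Proof.
move=> [P_ge0 P_sum1]; split=> [yi x0 | x0]; first by apply: sumr_ge0 => y _.
rewrite -(P_sum1 a [ffun=> x0]) /marginal.
by rewrite [RHS](partition_big (fun y : {ffun _ -> Y} => y i) xpredT).
Qed.

Lemma inductive_marginal_const i yi a x : inductive P ->
  marginal P i yi a x = marginal P i yi a [ffun=> x i].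
Proof. by move=> ind_P; apply: ind_P; rewrite ffunE. Qed.

End Marginals.

Definition local_risk (R : realFieldType) (X Y : finType) (PXY : X -> Y -> R)
    (k : Y -> X -> R) : R :=
  \sum_x0 \sum_yi \sum_y0 sdist R yi y0 * k yi x0 * PXY x0 y0.

Section Risk.
Variables (R : realFieldType) (X Y A : finType) (n : nat) (PXY : X -> Y -> R).
Variables (P : A -> {ffun 'I_n -> X} -> {ffun 'I_n -> Y} -> R) (a : A).

Lemma exp_risk_marginal : exp_risk PXY P a
  = n%:R^-1 * \sum_(i < n) \sum_(x : {ffun 'I_n -> X}) \sum_(y' : {ffun 'I_n -> Y})
      (\sum_yi sdist R yi (y' i) * marginal P i yi a x) * \prod_j PXY (x j) (y' j).
Proof.
rewrite /exp_risk.
under eq_bigr => x _ do under eq_bigr => y _ do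
  under eq_bigr => y' _ do rewrite mulr_sumr !mulr_suml.
under eq_bigr => x _ do under eq_bigr => y _ do rewrite exchange_big.
under eq_bigr => x _ do rewrite exchange_big.
rewrite exchange_big [RHS]mulr_sumr; apply: eq_bigr => i _.
rewrite mulr_sumr; apply: eq_bigr => x _.
rewrite mulr_sumr exchange_big; apply: eq_bigr => y' _.
have label_partition : \sum_(y : {ffun 'I_n -> Y}) sdist R (y i) (y' i) * P a x y
    = \sum_yi sdist R yi (y' i) * marginal P i yi a x.
  rewrite (partition_big (fun y : {ffun 'I_n -> Y} => y i) xpredT) //=.
  apply: eq_bigr => yi _; rewrite /marginal mulr_sumr.
  by apply: eq_big => y // /eqP ->.
rewrite -label_partition !mulr_suml mulr_sumr; apply: eq_bigr => y _.
by rewrite !mulrA.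
Qed.

Lemma exp_risk_local (g : 'I_n -> Y -> X -> R) :
  \sum_x \sum_y PXY x y = 1 ->
  (forall i yi x, marginal P i yi a x = g i yi (x i)) ->
  exp_risk PXY P a = n%:R^-1 * \sum_(i < n) local_risk PXY (g i).
Proof.
move=> PXY_sum1 marg_g; rewrite exp_risk_marginal; congr (_ * _).
apply: eq_bigr => i _.
pose h x0 y0 := \sum_yi sdist R yi y0 * g i yi x0.
have sum_other_labels (x : {ffun 'I_n -> X}) :
    \sum_(y' : {ffun 'I_n -> Y}) h (x i) (y' i) * \prod_j PXY (x j) (y' j)
    = (\sum_y0 h (x i) y0 * PXY (x i) y0) * \prod_(j | j != i) \sum_y PXY (x j) y.
  rewrite -(sum_ffun_prodD1 i (fun y0 => h (x i) y0 * PXY (x i) y0) (fun j => PXY (x j))).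
  by apply: eq_bigr => y' _; rewrite (bigD1 i) //= mulrA.
have local_marginal (x : {ffun 'I_n -> X}) (y' : {ffun 'I_n -> Y}) :
    \sum_yi sdist R yi (y' i) * marginal P i yi a x = h (x i) (y' i).
  by apply: eq_bigr => yi _; rewrite marg_g.
under eq_bigr => x _ do under eq_bigr => y' _ do rewrite local_marginal.
under eq_bigr => x _ do rewrite sum_other_labels.
rewrite (sum_ffun_prodD1 i (fun x0 => \sum_y0 h x0 y0 * PXY x0 y0) (fun _ x0 => \sum_y PXY x0 y)).
rewrite [X in _ * X]big1 ?mulr1 => [|j _]; last exact: PXY_sum1.
apply: eq_bigr => x0 _; rewrite exchange_big; apply: eq_bigr => y0 _.
by rewrite mulr_suml.
Qed.

End Risk.

Lemma local_risk_avg (R : realFieldType) (X Y : finType) (n : nat) (PXY : X -> Y -> R)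
    (c : R) (g : 'I_n -> Y -> X -> R) :
  local_risk PXY (fun y x => c * \sum_i g i y x) = c * \sum_i local_risk PXY (g i).
Proof.
rewrite /local_risk mulr_sumr.
under eq_bigr => x0 _ do under eq_bigr => yi _ do under eq_bigr => y0 _ do
  rewrite mulr_sumr mulr_sumr mulr_suml.
under [RHS]eq_bigr => i _ do rewrite mulr_sumr.
rewrite [RHS]exchange_big; apply: eq_bigr => x0 _.
under [RHS]eq_bigr => i _ do rewrite mulr_sumr.
rewrite [RHS]exchange_big; apply: eq_bigr => yi _.
under [RHS]eq_bigr => i _ do rewrite mulr_sumr.
rewrite [RHS]exchange_big; apply: eq_bigr => y0 _.
by apply: eq_bigr => i _; rewrite mulrCA !mulrA.
Qed.

Theorem lemma1 (R : realFieldType) (X Y A : finType) (n : nat)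
  (PXY : X -> Y -> R)
  (P : A -> {ffun 'I_n -> X} -> {ffun 'I_n -> Y} -> R) :
  is_joint_dist PXY -> (1 <= n)%N ->
  is_protocol P -> inductive P ->
  exists (F : {set {ffun X -> Y}}) (T : A -> {ffun X -> Y} -> R),
    (forall a f, 0 <= T a f) /\
    (forall a, \sum_(f in F) T a f = 1) /\
    (forall a, exp_risk PXY P a = exp_risk PXY (@det_protocol R X Y A n F T) a).
Proof.
move=> [_ PXY_sum1] n_gt0 prot_P ind_P.
pose g a i yi x0 := marginal P i yi a [ffun=> x0].
pose m a yi x0 := n%:R^-1 * \sum_i g a i yi x0.
have kernel_m a : is_kernel (m a).
  by apply: avg_kernel => // i; apply: marginal_kernel.
exists setT, (fun a => prod_kernel (m a)); split; [|split] => [a f | a | a].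
- exact: prod_kernel_ge0.
- by rewrite -(sum_prod_kernel (kernel_m a)); apply: eq_bigl => f; rewrite in_setT.
rewrite (exp_risk_local (g := g a) PXY_sum1); last first.
  by move=> i yi x; apply: inductive_marginal_const.
rewrite (exp_risk_local (g := fun _ => m a) PXY_sum1); last first.
  by move=> i yi x; apply: marginal_det_prod_kernel.
rewrite -local_risk_avg sumr_const card_ord -[local_risk _ _ *+ n]mulr_natl mulrA mulVf ?mul1r //.
by rewrite pnatr_eq0 -lt0n.
Qed.
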